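(* Let $\kappa,\mu,\nu>0$ and $0<\gamma<\frac1{\kappa+4}$. Let $(a,b)\in\mathbb R^2\setminus\{0\}$ satisfy $|b|\ge\mu$ or $|a|^\kappa|b|\ge\nu$, and set, for $x\ge1$, $$f(x)=\big(bx^{\frac34+\gamma}-ax^{-\frac14}\big)^2\big(x^{\frac14-\frac1{\kappa+4}}\big)^2+\big(bx^{\frac14}\big)^2\big(x^{\frac14-\frac1{\kappa+4}}\big)^2.$$ Then for every $\rho$ with $0<\rho\le f(1)$ there exist $C,\epsilon_0>0$, depending only on $\rho,\kappa,\mu,\nu,\gamma$, such that $f$ is $(C,\tfrac12;\rho,\epsilon_0)$-good on $[1,\infty)$.
   Context: A function $f$ on $[1,\infty)$ is $(C,\alpha;\rho,\epsilon_0)$-good if for every $0<\epsilon<\epsilon_0$ and every interval $I=(x_1,x_2)\subset[1,\infty)$ with $|f(x_1)|=\rho$, one has $m(\{x\in I:|f(x)|\le\epsilon\})\le C(\epsilon/\rho)^\alpha m(I)$, where $m$ is Lebesgue measure. *)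

From Stdlib Require Import Reals.
Open Scope R_scope.

(* Lebesgue outer measure bound: m*(A) <= c, i.e. for every delta > 0, A is
   covered by countably many open intervals (a_n, b_n) whose total length
   is at most c + delta. *)
Definition lebesgue_outer_le (A : R -> Prop) (c : R) : Prop :=
  forall delta : R, 0 < delta ->
    exists a b : nat -> R,
      (forall n, a n <= b n) /\
      (forall x, A x -> exists n, a n < x < b n) /\
      (forall N, sum_f_R0 (fun n => b n - a n) N <= c + delta).

Definition good (f : R -> R) (C alpha rho eps0 : R) : Prop :=
  forall eps : R, 0 < eps < eps0 ->
  forall x1 x2 : R, 1 <= x1 -> x1 < x2 ->
    Rabs (f x1) = rho ->
    lebesgue_outer_le (fun x => x1 < x < x2 /\ Rabs (f x) <= eps)
                      (C * Rpower (eps / rho) alpha * (x2 - x1)).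

Definition f41 (kappa gamma a b : R) (x : R) : R :=
  let t := Rpower x (/4 - / (kappa + 4)) in
  (b * Rpower x (3/4 + gamma) - a * Rpower x (- (/4))) ^ 2 * t ^ 2
  + (b * Rpower x (/4)) ^ 2 * t ^ 2.

(* t^k for t >= 0, k > 0, with the convention 0^k = 0
   (Stdlib's Rpower 0 k would be exp (k * ln 0) = 1). *)
Definition nnpow (t k : R) : R :=
  if Rle_dec t 0 then 0 else Rpower t k.

From Stdlib Require Import Reals Lra Psatz Classical FunctionalExtensionality.
Open Scope R_scope.

(* Write [w x = x^(1/(k+4))] and [U x = b x^(1+g) - a], so that [f x * w(x)^2 = U(x)^2 + b^2 x];
   after a change of sign [b > 0] and [U] increases at rate about [b x^g].  At a point where
   [f <= eps] we have [|U| <= sqrt(eps) w] and [b^2 <= eps], so [|b| >= mu] is impossible once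
   [eps < mu^2], and it suffices to bound the diameter of the sublevel set in [(x1, x2)].
   If [x2 <= 2 x1] all weights are comparable to [w(x1)], and [f(x1) = rho] forces [U] to
   travel a distance [sqrt(rho) w(x1) / 2] before reaching the sublevel set; this bounds
   [x2 - x1] from below and the diameter from above by [O(sqrt(eps/rho)) (x2 - x1)].
   If [x2 > 2 x1], the bound [|a|^k b >= nu] forces [b y^(1+g) >= c sqrt(rho) w(y)] at every
   sublevel point [y], with [c] depending only on [k, nu, rho]; this bounds the diameter by
   [O(sqrt(eps/rho)) x2]. *)

Lemma Rpower_pos x e : 0 < Rpower x e.
Proof. apply exp_pos. Qed.

Lemma Rpower_le_id x e : 1 <= x -> e <= 1 -> Rpower x e <= x.
Proof. intros. rewrite <- (Rpower_1 x) at 2 by lra. apply Rle_Rpower; lra. Qed.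

Lemma Rpower_double_le x e : 0 < x -> 0 <= e <= 1 -> Rpower (2 * x) e <= 2 * Rpower x e.
Proof.
  intros Hx He. rewrite <- Rpower_mult_distr by lra.
  assert (Rpower 2 e <= 2) by (apply Rpower_le_id; lra).
  pose proof (Rpower_pos x e). nra.
Qed.

Lemma Rpower_cross_le x y e : e <= 1 -> 0 < x <= y -> x * Rpower y e <= y * Rpower x e.
Proof.
  intros He Hxy.
  assert (Hsplit : forall t, 0 < t -> t = Rpower t (1 - e) * Rpower t e).
  { intros t Ht. rewrite <- Rpower_plus. replace (1 - e + e) with 1 by ring.
    now rewrite Rpower_1. }
  assert (Rpower x (1 - e) <= Rpower y (1 - e)) by (apply Rle_Rpower_l; lra).
  pose proof (Rpower_pos x e). pose proof (Rpower_pos y e).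
  assert (Ex := Hsplit x ltac:(lra)). assert (Ey := Hsplit y ltac:(lra)).
  apply Rle_trans with (Rpower x (1 - e) * (Rpower x e * Rpower y e)).
  { right. rewrite Ex at 1. ring. }
  apply Rle_trans with (Rpower y (1 - e) * (Rpower x e * Rpower y e)).
  2: { right. rewrite Ey at 3. ring. }
  apply Rmult_le_compat_r; [nra | assumption].
Qed.

Lemma Rpower_1plus x g : 0 < x -> Rpower x (1 + g) = x * Rpower x g.
Proof. intros. now rewrite Rpower_plus, Rpower_1. Qed.

Lemma Rpower_1plus_sub_ge y z g : 0 < y <= z -> 0 <= g ->
  Rpower y g * (z - y) <= Rpower z (1 + g) - Rpower y (1 + g).
Proof.
  intros. rewrite !Rpower_1plus by lra.
  assert (Rpower y g <= Rpower z g) by (apply Rle_Rpower_l; lra).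
  nra.
Qed.

(* The cross inequality [y z^g <= z y^g] bounds [y (z^g - y^g)] by [y^g (z - y)]. *)
Lemma Rpower_1plus_sub_le y z g : 0 < y <= z -> 0 <= g <= 1 ->
  Rpower z (1 + g) - Rpower y (1 + g) <= 2 * Rpower z g * (z - y).
Proof.
  intros. rewrite !Rpower_1plus by lra.
  assert (y * Rpower z g <= z * Rpower y g) by (apply Rpower_cross_le; lra).
  assert (Rpower y g * (z - y) <= Rpower z g * (z - y))
    by (apply Rmult_le_compat_r; [|apply Rle_Rpower_l]; lra).
  lra.
Qed.

Lemma lebesgue_outer_le_of_diam (S : R -> Prop) D : 0 <= D ->
  (forall y z, S y -> S z -> y <= z -> z - y <= D) ->
  lebesgue_outer_le S (2 * D).
Proof.
  intros HD Hdiam delta Hdelta.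
  destruct (classic (exists s, S s)) as [[s Hs] | Hempty].
  - exists (fun n => match n with O => s - D - delta / 4 | _ => 0 end).
    exists (fun n => match n with O => s + D + delta / 4 | _ => 0 end).
    split; [intros [|n]; lra|]. split.
    + intros x Hx. exists O. destruct (Rle_dec s x).
      * pose proof (Hdiam s x Hs Hx r). lra.
      * pose proof (Hdiam x s Hx Hs ltac:(lra)). lra.
    + intros N. induction N; simpl; lra.
  - exists (fun _ => 0), (fun _ => 0). split; [intros; lra|]. split.
    + intros x Hx. exfalso. eauto.
    + intros N. induction N; simpl; lra.
Qed.

Lemma f41_nonneg k g a b x : 0 <= f41 k g a b x.
Proof.
  unfold f41. cbv zeta.
  apply Rplus_le_le_0_compat; apply Rmult_le_pos; apply pow2_ge_0.
Qed.

Lemma f41_opp k g a b : f41 k g (- a) (- b) = f41 k g a b.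
Proof. extensionality x. unfold f41. cbv zeta. ring. Qed.

(* With [q = x^(1/4)], [p = x^g] and [w = x^(1/(k+4))] every power in [f41] is a monomial in [q, p, w]. *)
Lemma f41_weighted k g a b x : 0 < x -> 0 < k ->
  f41 k g a b x * Rpower x (/ (k + 4)) ^ 2 = (b * Rpower x (1 + g) - a) ^ 2 + b ^ 2 * x.
Proof.
  intros Hx Hk. unfold f41, Rpower. cbv zeta.
  replace (b ^ 2 * x) with (b ^ 2 * exp (ln x)) by (now rewrite exp_ln).
  set (L := ln x). set (q := exp (/ 4 * L)). set (p := exp (g * L)).
  set (w := exp (/ (k + 4) * L)).
  assert (Hq : 0 < q) by apply exp_pos. assert (Hw : 0 < w) by apply exp_pos.
  assert (E1 : exp ((3 / 4 + g) * L) = q * q * q * p).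
  { unfold q, p. rewrite <- !exp_plus. f_equal. field. }
  assert (E2 : exp (- (/ 4) * L) = / q).
  { unfold q. rewrite <- exp_Ropp. f_equal. field. }
  assert (E3 : exp ((/ 4 - / (k + 4)) * L) = q / w).
  { unfold q, w, Rdiv. rewrite <- exp_Ropp, <- exp_plus. f_equal. field. lra. }
  assert (E4 : exp ((1 + g) * L) = q * q * q * q * p).
  { unfold q, p. rewrite <- !exp_plus. f_equal. field. }
  assert (E5 : exp L = q * q * q * q).
  { unfold q. rewrite <- !exp_plus. f_equal. field. }
  rewrite E1, E2, E3, E4, E5. field. lra.
Qed.

Lemma Rabs_le_of_sq_le x M : 0 <= M -> x ^ 2 <= M ^ 2 -> Rabs x <= M.
Proof. intros HM Hsq. rewrite <- pow2_abs in Hsq. pose proof (Rabs_pos x). nra. Qed.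

Section Sublevel.
Variables (k g a b eps rho : R).
Hypotheses (Hk : 0 < k) (Hg : 0 <= g <= 1) (Hb : 0 < b) (Heps : 0 < eps) (Hrho : 0 < rho).

Let w x := Rpower x (/ (k + 4)).
Let U x := b * Rpower x (1 + g) - a.

Let w_pos x : 0 < w x.
Proof. apply Rpower_pos. Qed.

Let w_sq x : w x ^ 2 = Rpower x (2 * / (k + 4)).
Proof. unfold w. replace (2 * / (k + 4)) with (/ (k + 4) + / (k + 4)) by ring.
  rewrite Rpower_plus. ring. Qed.

Let exponent_le_1 : 2 * / (k + 4) <= 1.
Proof. apply (Rmult_le_reg_r (k + 4)); [lra|]. field_simplify; lra. Qed.

Lemma sublevel_weighted y : 0 < y -> f41 k g a b y <= eps -> U y ^ 2 + b ^ 2 * y <= eps * w y ^ 2.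
Proof.
  intros Hy Hfy. unfold U, w. rewrite <- (f41_weighted k) by lra.
  apply Rmult_le_compat_r; [apply pow2_ge_0 | exact Hfy].
Qed.

Lemma abs_U_sublevel y : 0 < y -> f41 k g a b y <= eps -> Rabs (U y) <= sqrt eps * w y.
Proof.
  intros Hy Hfy. pose proof (sublevel_weighted y Hy Hfy).
  pose proof (sqrt_pos eps). pose proof (sqrt_sqrt eps ltac:(lra)). pose proof (w_pos y).
  apply Rabs_le_of_sq_le; nra.
Qed.

Lemma b_sq_sublevel y : 1 <= y -> f41 k g a b y <= eps -> b ^ 2 <= eps.
Proof.
  intros Hy Hfy. pose proof (sublevel_weighted y ltac:(lra) Hfy).
  assert (w y ^ 2 <= y) by (rewrite w_sq; apply Rpower_le_id; lra).
  nra.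
Qed.

(* [x / w x ^ 2] is nondecreasing, so the bound [b^2 y <= eps w(y)^2] propagates back to [x1]. *)
Lemma abs_U_level x1 y : 1 <= x1 <= y -> f41 k g a b x1 = rho -> f41 k g a b y <= eps -> 2 * eps <= rho ->
  sqrt rho * w x1 <= 2 * Rabs (U x1).
Proof.
  intros Hxy Hf1 Hfy Her.
  pose proof (sublevel_weighted y ltac:(lra) Hfy) as Hy.
  assert (Hcross : x1 * w y ^ 2 <= y * w x1 ^ 2)
    by (rewrite !w_sq; apply Rpower_cross_le; lra).
  assert (Hbx1 : b ^ 2 * x1 <= eps * w x1 ^ 2).
  { pose proof (w_pos y). apply (Rmult_le_reg_r (w y ^ 2)); [nra|].
    apply Rle_trans with (b ^ 2 * (y * w x1 ^ 2)); [nra|].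
    assert (0 <= w x1 ^ 2) by apply pow2_ge_0. nra. }
  assert (Hlevel : U x1 ^ 2 + b ^ 2 * x1 = rho * w x1 ^ 2).
  { unfold U, w. rewrite <- (f41_weighted k) by lra. now rewrite Hf1. }
  assert (0 <= 2 * Rabs (U x1)) by (pose proof (Rabs_pos (U x1)); lra).
  apply Rle_trans with (Rabs (sqrt rho * w x1)); [apply Rle_abs|].
  apply Rabs_le_of_sq_le; [assumption|].
  rewrite Rpow_mult_distr, pow2_sqrt by lra.
  replace ((2 * Rabs (U x1)) ^ 2) with (4 * U x1 ^ 2) by (rewrite Rpow_mult_distr, pow2_abs; ring).
  nra.
Qed.

Lemma U_increment_ge y z : 0 < y <= z -> b * Rpower y g * (z - y) <= U z - U y.
Proof.
  intros. unfold U. rewrite Rmult_assoc.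
  pose proof (Rpower_1plus_sub_ge y z g ltac:(lra) ltac:(lra)). nra.
Qed.

Lemma U_increment_le y z : 0 < y <= z -> U z - U y <= 2 * b * Rpower z g * (z - y).
Proof.
  intros. unfold U.
  pose proof (Rpower_1plus_sub_le y z g ltac:(lra) Hg). nra.
Qed.

Lemma sublevel_gap_short x1 x2 y z :
  1 <= x1 -> x2 <= 2 * x1 -> x1 <= y <= z -> z <= x2 ->
  f41 k g a b x1 = rho -> f41 k g a b y <= eps -> f41 k g a b z <= eps -> 64 * eps <= rho ->
  sqrt rho * (z - y) <= 64 * sqrt eps * (x2 - x1).
Proof.
  intros Hx1 Hx2 Hyz Hz Hf1 Hfy Hfz Her.
  assert (HEP : 8 * sqrt eps <= sqrt rho).
  { pose proof (sqrt_sqrt eps ltac:(lra)). pose proof (sqrt_sqrt rho ltac:(lra)).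
    pose proof (sqrt_pos eps). pose proof (sqrt_pos rho). nra. }
  assert (HE : 0 <= sqrt eps) by apply sqrt_pos.
  assert (Hdouble : forall e t, 0 <= e <= 1 -> x1 <= t <= x2 -> Rpower t e <= 2 * Rpower x1 e).
  { intros e t He Ht. apply Rle_trans with (Rpower (2 * x1) e).
    - apply Rle_Rpower_l; lra.
    - apply Rpower_double_le; lra. }
  assert (Hom : 0 <= / (k + 4) <= 1) by (split; [left; apply Rinv_0_lt_compat|]; lra).
  assert (Hwy : w y <= 2 * w x1) by (apply Hdouble; lra).
  assert (Hwz : w z <= 2 * w x1) by (apply Hdouble; lra).
  set (X := b * Rpower x1 g).
  assert (HX : 0 < X) by (pose proof (Rpower_pos x1 g); unfold X; nra).
  assert (HXy : X <= b * Rpower y g) by (apply Rmult_le_compat_l; [|apply Rle_Rpower_l]; lra).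
  assert (HyX : b * Rpower y g <= 2 * X) by (unfold X; pose proof (Hdouble g y Hg ltac:(lra)); nra).
  assert (HUy : Rabs (U y) <= sqrt eps * w y) by (apply abs_U_sublevel; lra).
  assert (HUz : Rabs (U z) <= sqrt eps * w z) by (apply abs_U_sublevel; lra).
  assert (Hspread : sqrt rho * w x1 <= 16 * X * (x2 - x1)).
  { pose proof (abs_U_level x1 y ltac:(lra) Hf1 Hfy ltac:(lra)).
    assert (0 <= U y - U x1).
    { pose proof (U_increment_ge x1 y ltac:(lra)).
      assert (0 <= X * (y - x1)) by (apply Rmult_le_pos; lra). unfold X in *. lra. }
    pose proof (U_increment_le x1 y ltac:(lra)).
    assert (Rabs (U x1) <= Rabs (U y) + (U y - U x1))
      by (unfold Rabs at 1 2; destruct (Rcase_abs (U x1)), (Rcase_abs (U y)); lra).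
    assert (b * Rpower y g * (y - x1) <= 2 * X * (x2 - x1))
      by (apply Rmult_le_compat; lra).
    assert (sqrt eps * w y <= sqrt eps * (2 * w x1)) by (apply Rmult_le_compat_l; lra).
    assert (8 * sqrt eps * w x1 <= sqrt rho * w x1) by (pose proof (w_pos x1); nra).
    lra. }
  assert (Hstep : X * (z - y) <= 4 * sqrt eps * w x1).
  { pose proof (U_increment_ge y z ltac:(lra)).
    assert (U z - U y <= Rabs (U z) + Rabs (U y))
      by (unfold Rabs; destruct (Rcase_abs (U z)), (Rcase_abs (U y)); lra).
    nra. }
  apply (Rmult_le_reg_l X); [exact HX|]. nra.
Qed.

Section LongRange.
Variables c nu : R.
Hypotheses (Herho : eps <= rho) (Hc : 0 < c <= 1)
  (HcK : c * (Rpower (2 * sqrt rho) k * sqrt rho) <= nu)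
  (Ha : 0 < Rabs a) (Hanu : nu <= Rpower (Rabs a) k * b).

(* Otherwise [|a| <= 2 sqrt(rho) w(y)], and then [|a|^k b] falls below [nu]. *)
Lemma U_lead_sublevel y : 1 <= y -> f41 k g a b y <= eps ->
  c * sqrt rho * w y <= b * Rpower y (1 + g).
Proof.
  intros Hy Hfy. apply Rnot_lt_le. intros Hsmall.
  assert (HEP : sqrt eps <= sqrt rho) by (apply sqrt_le_1_alt; lra).
  assert (HP : 0 < sqrt rho) by (apply sqrt_lt_R0; lra).
  pose proof (w_pos y) as Hwy.
  assert (Habs_a : Rabs a <= 2 * sqrt rho * w y).
  { pose proof (abs_U_sublevel y ltac:(lra) Hfy).
    replace a with (b * Rpower y (1 + g) - U y) by (unfold U; ring).
    apply Rle_trans with (Rabs (b * Rpower y (1 + g)) + Rabs (U y)).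
    - unfold Rminus. rewrite <- (Rabs_Ropp (U y)). apply Rabs_triang.
    - rewrite Rabs_pos_eq by (pose proof (Rpower_pos y (1 + g)); nra).
      assert (0 <= sqrt rho * w y) by nra.
      assert (c * sqrt rho * w y <= sqrt rho * w y) by (apply Rmult_le_compat_r; nra).
      assert (sqrt eps * w y <= sqrt rho * w y) by nra.
      lra. }
  set (V := Rpower y (/ (k + 4) * k)).
  assert (HV : 0 < V) by apply Rpower_pos.
  assert (Hak : Rpower (Rabs a) k <= Rpower (2 * sqrt rho) k * V).
  { apply Rle_trans with (Rpower (2 * sqrt rho * w y) k); [apply Rle_Rpower_l; lra|].
    rewrite <- Rpower_mult_distr by lra. unfold w, V. rewrite Rpower_mult. lra. }
  assert (HVw : V * w y <= Rpower y (1 + g)).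
  { unfold V, w. rewrite <- Rpower_plus. apply Rle_Rpower; [lra|].
    apply (Rmult_le_reg_r (k + 4)); [lra|]. field_simplify; nra. }
  assert (HVb : V * b < c * sqrt rho).
  { pose proof (Rpower_pos y (1 + g)).
    assert (0 <= c * sqrt rho) by nra.
    apply (Rmult_lt_reg_r (Rpower y (1 + g))); [assumption|].
    rewrite Rmult_assoc.
    apply Rlt_le_trans with (V * (c * sqrt rho * w y)); [apply Rmult_lt_compat_l; lra|].
    replace (V * (c * sqrt rho * w y)) with (c * sqrt rho * (V * w y)) by ring.
    apply Rmult_le_compat_l; lra. }
  pose proof (Rpower_pos (2 * sqrt rho) k). nra.
Qed.

Lemma sublevel_gap_long x1 x2 y z :
  1 <= x1 -> 2 * x1 <= x2 -> x1 <= y <= z -> z <= x2 ->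
  f41 k g a b y <= eps -> f41 k g a b z <= eps ->
  c * sqrt rho * (z - y) <= 4 * sqrt eps * (x2 - x1).
Proof.
  intros Hx1 Hx2 Hyz Hz Hfy Hfz.
  assert (HE : 0 <= sqrt eps) by apply sqrt_pos.
  pose proof (w_pos y) as Hwy.
  assert (Hw2 : forall t, 0 < t <= x2 -> w t <= w x2) by (intros; apply Rle_Rpower_l; [left; apply Rinv_0_lt_compat|]; lra).
  assert (Hstep : b * Rpower y g * (z - y) <= 2 * sqrt eps * w x2).
  { pose proof (U_increment_ge y z ltac:(lra)).
    pose proof (abs_U_sublevel y ltac:(lra) Hfy). pose proof (abs_U_sublevel z ltac:(lra) Hfz).
    assert (U z - U y <= Rabs (U z) + Rabs (U y))
      by (unfold Rabs; destruct (Rcase_abs (U z)), (Rcase_abs (U y)); lra).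
    pose proof (Hw2 y ltac:(lra)). pose proof (Hw2 z ltac:(lra)). nra. }
  assert (Hcross : y * w x2 <= x2 * w y).
  { apply Rpower_cross_le; [|lra]. apply (Rmult_le_reg_r (k + 4)); [lra|]. field_simplify; lra. }
  pose proof (U_lead_sublevel y ltac:(lra) Hfy) as Hlead.
  rewrite Rpower_1plus in Hlead by lra.
  assert (c * sqrt rho * (z - y) * w y <= 2 * sqrt eps * x2 * w y).
  { apply Rle_trans with (y * (b * Rpower y g * (z - y))); nra. }
  assert (c * sqrt rho * (z - y) <= 2 * sqrt eps * x2) by (apply (Rmult_le_reg_r (w y)); lra).
  nra.
Qed.

End LongRange.

End Sublevel.

Definition long_range_const k nu rho :=
  nu / (nu + Rpower (2 * sqrt rho) k * sqrt rho).

Lemma long_range_const_spec k nu rho : 0 < nu ->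
  0 < long_range_const k nu rho <= 1 /\
  long_range_const k nu rho * (Rpower (2 * sqrt rho) k * sqrt rho) <= nu.
Proof.
  intros Hnu. unfold long_range_const.
  set (K := Rpower (2 * sqrt rho) k * sqrt rho).
  assert (HK : 0 <= K) by (pose proof (Rpower_pos (2 * sqrt rho) k); pose proof (sqrt_pos rho); unfold K; nra).
  split; [split|].
  - apply Rdiv_lt_0_compat; lra.
  - apply (Rmult_le_reg_r (nu + K)); [lra|]. unfold Rdiv.
    rewrite Rmult_assoc, Rinv_l by lra. lra.
  - replace (nu / (nu + K) * K) with (nu - nu / (nu + K) * nu) by (field; lra).
    assert (0 <= nu / (nu + K) * nu) by (apply Rmult_le_pos; [apply Rlt_le, Rdiv_lt_0_compat|]; lra).
    lra.
Qed.

Lemma good_f41_pos k mu nu g rho a b :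
  0 < k -> 0 <= g <= 1 -> 0 < mu -> 0 < nu -> 0 < rho -> 0 < b ->
  (mu <= b \/ (0 < Rabs a /\ nu <= Rpower (Rabs a) k * b)) ->
  good (f41 k g a b) (2 * (64 + 4 / long_range_const k nu rho)) (/ 2) rho
    (Rmin (rho / 64) (mu ^ 2)).
Proof.
  intros Hk Hg Hmu Hnu Hrho Hb Hcond eps [Heps Heps0] x1 x2 Hx1 Hx12 Hf1.
  rewrite Rabs_pos_eq in Hf1 by apply f41_nonneg.
  destruct (long_range_const_spec k nu rho Hnu) as [Hc HcK].
  set (c := long_range_const k nu rho) in *.
  pose proof (Rmin_l (rho / 64) (mu ^ 2)). pose proof (Rmin_r (rho / 64) (mu ^ 2)).
  assert (HP : 0 < sqrt rho) by (apply sqrt_lt_R0; lra).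
  assert (HE : 0 <= sqrt eps) by apply sqrt_pos.
  assert (H4c : 0 <= 4 / c) by (apply Rlt_le, Rdiv_lt_0_compat; lra).
  rewrite Rpower_sqrt, sqrt_div_alt by (try apply Rdiv_lt_0_compat; lra).
  replace (2 * (64 + 4 / c) * (sqrt eps / sqrt rho) * (x2 - x1))
    with (2 * ((64 + 4 / c) * sqrt eps * (x2 - x1) / sqrt rho)) by (field; lra).
  apply lebesgue_outer_le_of_diam.
  { apply Rmult_le_pos; [|apply Rlt_le, Rinv_0_lt_compat; lra].
    apply Rmult_le_pos; [apply Rmult_le_pos|]; lra. }
  intros y z [Hy Hfy] [Hz Hfz] Hyz.
  pose proof (Rle_abs (f41 k g a b y)). pose proof (Rle_abs (f41 k g a b z)).
  apply (Rmult_le_reg_l (sqrt rho)); [assumption|].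
  replace (sqrt rho * ((64 + 4 / c) * sqrt eps * (x2 - x1) / sqrt rho))
    with (64 * sqrt eps * (x2 - x1) + 4 / c * sqrt eps * (x2 - x1)) by (field; lra).
  assert (0 <= sqrt eps * (x2 - x1)) by (apply Rmult_le_pos; lra).
  destruct (Rle_dec x2 (2 * x1)).
  - assert (sqrt rho * (z - y) <= 64 * sqrt eps * (x2 - x1))
      by (apply (sublevel_gap_short k g a b eps rho); lra).
    assert (0 <= 4 / c * sqrt eps * (x2 - x1)) by (rewrite Rmult_assoc; apply Rmult_le_pos; lra).
    lra.
  - destruct Hcond as [Hbmu | [Ha Hanu]].
    { assert (b ^ 2 <= eps) by (apply (b_sq_sublevel k g a b eps) with (y := y); lra). nra. }
    assert (c * sqrt rho * (z - y) <= 4 * sqrt eps * (x2 - x1))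
      by (apply (sublevel_gap_long k g a b eps rho) with (nu := nu); lra).
    assert (sqrt rho * (z - y) <= 4 / c * sqrt eps * (x2 - x1)).
    { apply (Rmult_le_reg_l c); [lra|].
      replace (c * (4 / c * sqrt eps * (x2 - x1))) with (4 * sqrt eps * (x2 - x1)) by (field; lra).
      lra. }
    assert (0 <= 64 * sqrt eps * (x2 - x1)) by lra.
    lra.
Qed.

Lemma nnpow_pos_cond k nu a b : 0 < nu -> nnpow (Rabs a) k * b >= nu ->
  0 < Rabs a /\ nu <= Rpower (Rabs a) k * b.
Proof.
  unfold nnpow. destruct (Rle_dec (Rabs a) 0); intros; [lra | split; lra].
Qed.

Theorem lemma4p1 (kappa mu nu gamma : R) :
  0 < kappa -> 0 < mu -> 0 < nu -> 0 < gamma -> gamma < / (kappa + 4) ->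
  forall rho : R, 0 < rho ->
  exists C eps0 : R, 0 < C /\ 0 < eps0 /\
    forall a b : R, (a <> 0 \/ b <> 0) ->
      (Rabs b >= mu \/ nnpow (Rabs a) kappa * Rabs b >= nu) ->
      rho <= f41 kappa gamma a b 1 ->
      good (f41 kappa gamma a b) C (/2) rho eps0.
Proof.
  intros Hk Hmu Hnu Hg Hgk rho Hrho.
  destruct (long_range_const_spec kappa nu rho Hnu) as [Hc _].
  exists (2 * (64 + 4 / long_range_const kappa nu rho)), (Rmin (rho / 64) (mu ^ 2)).
  split; [assert (0 < 4 / long_range_const kappa nu rho) by (apply Rdiv_lt_0_compat; lra); lra|].
  split; [apply Rmin_pos; nra|].
  intros a b _ Hcond _.
  assert (Hg1 : 0 <= gamma <= 1).
  { assert (/ (kappa + 4) < / 1) by (apply Rinv_lt_contravar; lra).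
    rewrite Rinv_1 in *. lra. }
  assert (Hcond' : mu <= Rabs b \/ (0 < Rabs a /\ nu <= Rpower (Rabs a) kappa * Rabs b))
    by (destruct Hcond; [left; lra | right; now apply nnpow_pos_cond]).
  destruct (Rtotal_order b 0) as [Hb | [Hb | Hb]].
  - rewrite <- f41_opp. rewrite Rabs_left in Hcond' by lra.
    apply good_f41_pos; try lra. now rewrite Rabs_Ropp.
  - subst b. rewrite Rabs_R0, Rmult_0_r in Hcond'. lra.
  - rewrite Rabs_pos_eq in Hcond' by lra. now apply good_f41_pos.
Qed.
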